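(* An element $r\in\mathrm{Im}(1-\tau)\subset\overline{\mathfrak L}\otimes\overline{\mathfrak L}$ satisfies the classical Yang–Baxter equation $c(r)=0$ if and only if it satisfies the modified Yang–Baxter equation $x\cdot c(r)=0$ for all $x\in\overline{\mathfrak L}$.
   Context: Let $\mathbb F$ be a field of characteristic $0$ and let $\Gamma$ be an additive subgroup of $\mathbb F$ with $\mathbb Z\subseteq\Gamma$. The centerless generalized Heisenberg–Virasoro algebra $\overline{\mathfrak L}$ is the Lie algebra with basis $\{L_x:x\in\Gamma\}\cup\{I_x:x\in\Gamma\setminus\{0\}\}$ (with the convention $I_0=0$) and brackets $[L_x,L_y]=(y-x)L_{x+y}$, $[L_x,I_y]=yI_{x+y}$, $[I_x,I_y]=0$. $\tau(a\otimes b)=b\otimes a$. For $r=\sum_i a_i\otimes b_i$, define $$c(r)=\sum_{i,j}\big([a_i,a_j]\otimes b_i\otimes b_j+a_i\otimes[b_i,a_j]\otimes b_j+a_i\otimes a_j\otimes[b_i,b_j]\big)\in\overline{\mathfrak L}^{\otimes3},$$ i.e. $c(r)=[r^{12},r^{13}]+[r^{12},r^{23}]+[r^{13},r^{23}]$. The action on $\overline{\mathfrak L}^{\otimes 3}$ is the diagonal adjoint action. *)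

From HB Require Import structures.
From mathcomp Require Import all_boot all_order all_algebra.
Set Implicit Arguments. Unset Strict Implicit. Unset Printing Implicit Defensive.
Import GRing.Theory.
Local Open Scope ring_scope.

(* Basis indices of the centerless generalized Heisenberg-Virasoro algebra:
   (false, x) stands for L_x, (true, x) stands for I_x.  The convention
   I_0 = 0 is implemented by the coefficient functions below, which always
   assign coefficient 0 to the index (true, 0). *)
Definition hvix (F : fieldType) := (bool * F)%type.

Definition is_zero_ix (F : fieldType) (b : hvix F) : bool := b.1 && (b.2 == 0).

(* Elements of Lbar, Lbar (x) Lbar, Lbar^(x)3 as finite formal sums
   (coefficient, basis index tuple). *)
Definition hv1 (F : fieldType) := seq (F * hvix F).
Definition hv2 (F : fieldType) := seq (F * (hvix F * hvix F)).
Definition hv3 (F : fieldType) := seq (F * (hvix F * hvix F * hvix F)).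

Definition coef1 (F : fieldType) (v : hv1 F) (b : hvix F) : F :=
  if is_zero_ix b then 0 else \sum_(t <- v) (if t.2 == b then t.1 else 0).
Definition coef2 (F : fieldType) (v : hv2 F) (b : hvix F * hvix F) : F :=
  if is_zero_ix b.1 || is_zero_ix b.2 then 0
  else \sum_(t <- v) (if t.2 == b then t.1 else 0).
Definition coef3 (F : fieldType) (v : hv3 F) (b : hvix F * hvix F * hvix F) : F :=
  if [|| is_zero_ix b.1.1, is_zero_ix b.1.2 | is_zero_ix b.2] then 0
  else \sum_(t <- v) (if t.2 == b then t.1 else 0).

Definition valid_ix (F : fieldType) (G : {pred F}) (b : hvix F) : bool := b.2 \in G.
Definition valid1 (F : fieldType) (G : {pred F}) (v : hv1 F) : bool :=
  all (fun t => valid_ix G t.2) v.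
Definition valid2 (F : fieldType) (G : {pred F}) (v : hv2 F) : bool :=
  all (fun t => valid_ix G t.2.1 && valid_ix G t.2.2) v.

Definition hvbr (F : fieldType) (a b : hvix F) : hv1 F :=
  match a, b with
  | (false, x), (false, y) => [:: (y - x, (false, x + y))]
  | (false, x), (true, y) => [:: (y, (true, x + y))]
  | (true, x), (false, y) => [:: (- x, (true, x + y))]
  | (true, _), (true, _) => [::]
  end.

Definition tau2 (F : fieldType) (s : hv2 F) : hv2 F :=
  [seq (t.1, (t.2.2, t.2.1)) | t <- s].
Definition one_minus_tau (F : fieldType) (s : hv2 F) : hv2 F :=
  s ++ [seq (- t.1, t.2) | t <- tau2 s].

(* c(r) = [r12,r13] + [r12,r23] + [r13,r23], i.e.
   sum_{i,j} [a_i,a_j] (x) b_i (x) b_j + a_i (x) [b_i,a_j] (x) b_j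
             + a_i (x) a_j (x) [b_i,b_j]. *)
Definition cyb (F : fieldType) (r : hv2 F) : hv3 F :=
  flatten [seq
    let: (ci, (ai, bi)) := ti in
    let: (cj, (aj, bj)) := tj in
    [seq (ci * cj * k.1, (k.2, bi, bj)) | k <- hvbr ai aj] ++
    [seq (ci * cj * k.1, (ai, k.2, bj)) | k <- hvbr bi aj] ++
    [seq (ci * cj * k.1, (ai, aj, k.2)) | k <- hvbr bi bj]
  | ti <- r, tj <- r].

Definition act3 (F : fieldType) (x : hv1 F) (w : hv3 F) : hv3 F :=
  flatten [seq
    let: (d, e) := tx in
    let: (c, (u, v, z)) := tw in
    [seq (d * c * k.1, (k.2, v, z)) | k <- hvbr e u] ++
    [seq (d * c * k.1, (u, k.2, z)) | k <- hvbr e v] ++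
    [seq (d * c * k.1, (u, v, k.2)) | k <- hvbr e z]
  | tx <- x, tw <- w].

From HB Require Import structures.
From mathcomp Require Import all_boot all_order all_algebra.
Set Implicit Arguments. Unset Strict Implicit.
Import GRing.Theory.
Local Open Scope ring_scope.

(* The equivalence holds for every w in Lbar^(x)3, not only for
   w = c(r) with r in Im(1 - tau): w = 0 iff x . w = 0 for all x in Lbar.
   - "=>" is linearity: the coefficients of x . w are linear combinations
     of the coefficients of w; basis tensors involving the fake vector I_0
     (whose coefficients are discarded by coef3) only feed back into
     tensors involving I_0, so they never contribute.
   - "<=" uses only the elements L_n, n in N.  Fix a basis tensor
     e_1 (x) e_2 (x) e_3 with e_1 of degree a.  The action of L_n sends it to
     (a or a - n) e_1' (x) e_2 (x) e_3 with e_1' of degree n + a, plus terms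
     in other basis tensors.  Since char F = 0 we can pick n so that no other
     basis tensor of w reaches e_1' (x) e_2 (x) e_3 and the scalar a (or a - n)
     is nonzero; the vanishing of L_n . w at that tensor then forces the
     coefficient of e_1 (x) e_2 (x) e_3 in w to vanish. *)

Section CharZero.
Variable F : fieldType.
Hypothesis hchar : [pchar F] =i pred0.

Lemma natr_inj : injective (fun n : nat => (n%:R : F)).
Proof.
have nat0 := iffLR (pcharf0P F) hchar.
suff le_of_eq m n : (m%:R : F) = n%:R -> (m <= n)%N.
  move=> m n /= Emn; apply/eqP.
  by rewrite eqn_leq (le_of_eq _ _ Emn) (le_of_eq _ _ (esym Emn)).
move=> Emn; rewrite leqNgt; apply/negP => lt_nm.
have := nat0 (m - n)%N; rewrite natrB ?(ltnW lt_nm) // Emn subrr eqxx.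
by move/esym; rewrite subn_eq0 leqNgt lt_nm.
Qed.

Lemma nat_avoiding (l : seq F) : exists n : nat, (n%:R : F) \notin l.
Proof.
have [/allP all_in | /allPn [n _ n_notin]] :=
  boolP (all (fun n : nat => (n%:R : F) \in l) (iota 0 (size l).+1)).
  have uniq_img : uniq [seq (n%:R : F) | n <- iota 0 (size l).+1].
    by rewrite map_inj_uniq ?iota_uniq //; apply: natr_inj.
  have sub_img : {subset [seq (n%:R : F) | n <- iota 0 (size l).+1] <= l}.
    by move=> y /mapP [n n_in ->]; apply: all_in.
  by have := uniq_leq_size uniq_img sub_img; rewrite size_map size_iota ltnn.
by exists n.
Qed.

End CharZero.

Section FormalSums.
Variables (R : pzSemiRingType) (T : eqType).

(* Total coefficient of the basis element b in a formal sum, without any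
   convention discarding degenerate basis elements. *)
Definition mass (w : seq (R * T)) (b : T) : R :=
  \sum_(t <- w) (if t.2 == b then t.1 else 0).

Lemma sum_delta (s : seq T) (x : T) (A : T -> R) : uniq s -> x \in s ->
  \sum_(u <- s) (if x == u then A u else 0) = A x.
Proof.
move=> uniq_s x_in; rewrite -big_mkcond /= -big_filter.
have -> : [seq u <- s | x == u] = [:: x].
  rewrite (eq_filter (a2 := pred1 x)); last by move=> y /=; rewrite eq_sym.
  by rewrite filter_pred1_uniq.
by rewrite big_seq1.
Qed.

Lemma sum_by_mass (w : seq (R * T)) (phi : T -> R) :
  \sum_(t <- w) t.1 * phi t.2 = \sum_(u <- undup (map snd w)) mass w u * phi u.
Proof.
rewrite /mass; under [RHS]eq_bigr do rewrite mulr_suml.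
rewrite exchange_big /= big_seq [RHS]big_seq; apply: eq_bigr => t t_in.
rewrite (eq_bigr (fun u => if t.2 == u then t.1 * phi u else 0)).
  by rewrite sum_delta ?undup_uniq // mem_undup; apply: map_f.
by move=> u _; case: ifP; rewrite ?mul0r.
Qed.

End FormalSums.

Section Action.
Variable F : fieldType.

Local Notation idx3 := (hvix F * hvix F * hvix F)%type.

Definition degenerate3 (u : idx3) : bool :=
  [|| is_zero_ix u.1.1, is_zero_ix u.1.2 | is_zero_ix u.2].

Lemma coef3E (w : hv3 F) (b : idx3) :
  coef3 w b = if degenerate3 b then 0 else mass w b.
Proof. by []. Qed.

Definition act_term (tx : F * hvix F) (tw : F * idx3) : hv3 F :=
  let: (d, e) := tx in
  let: (c, (u, v, z)) := tw in
  [seq (d * c * k.1, (k.2, v, z)) | k <- hvbr e u] ++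
  [seq (d * c * k.1, (u, k.2, z)) | k <- hvbr e v] ++
  [seq (d * c * k.1, (u, v, k.2)) | k <- hvbr e z].

Definition act_coef (tx : F * hvix F) (u t : idx3) : F :=
  mass (act_term tx (1, u)) t.

Lemma mass_act3 (x : hv1 F) (w : hv3 F) (t : idx3) :
  mass (act3 x w) t = \sum_(tx <- x) \sum_(tw <- w) tw.1 * act_coef tx tw.2 t.
Proof.
have -> : act3 x w = flatten [seq act_term tx tw | tx <- x, tw <- w] by [].
rewrite /mass big_flatten /= big_allpairs_dep /=.
apply: eq_bigr => [[d e] _]; apply: eq_bigr => [[c [[u v] z]] _].
rewrite /act_coef /mass /act_term /= !big_cat /= !big_map !mulrDr !mulr_sumr.
by congr (_ + (_ + _)); apply: eq_bigr => k _; case: ifP;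
  rewrite ?mulr0 // mulr1 mulrCA mulrA.
Qed.

Lemma hvbr_degenerate (e a : hvix F) (k : F * hvix F) :
  is_zero_ix a -> k \in hvbr e a -> k.1 = 0.
Proof.
case: a => [[] y]; rewrite /is_zero_ix //= => /eqP ->; case: e => [[] x] //=.
by rewrite inE => /eqP ->.
Qed.

Lemma sum_vanishing (s : hv1 F) (f : F * hvix F -> idx3) (c : F) (t : idx3) :
  (forall k, k \in s -> f k = t -> k.1 = 0) ->
  \sum_(k <- s) (if f k == t then c * k.1 else 0) = 0.
Proof.
move=> vanish; rewrite big_seq big1 // => k k_in.
by case: eqP => // /(vanish k k_in) ->; rewrite mulr0.
Qed.

Lemma act_coef_degenerate (tx : F * hvix F) (u t : idx3) :
  degenerate3 u -> ~~ degenerate3 t -> act_coef tx u t = 0.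
Proof.
case: tx => d e; case: u => [[u1 u2] u3]; case: t => [[t1 t2] t3].
rewrite /degenerate3 /act_coef /mass /act_term /= !big_cat /= !big_map.
move=> deg_u nondeg_t.
rewrite !sum_vanishing ?addr0 // => k k_in /= [E1 E2 E3];
rewrite -E1 -E2 -E3 in nondeg_t; case/or3P: deg_u => Z;
solve [exact: (hvbr_degenerate Z k_in) | by move: nondeg_t; rewrite Z ?orbT].
Qed.

Lemma hvbr_L (n : F) (q : bool) (y : F) :
  hvbr (false, n) (q, y) = [:: (if q then y else y - n, (q, n + y))].
Proof. by case: q. Qed.

Lemma act_coef_L (n a : F) (p : bool) (b2 b3 : hvix F) (u : idx3) :
  u.1.1.2 - a != n ->
  act_coef (1, (false, n)) u ((p, n + a), b2, b3) =
  if u == ((p, a), b2, b3) then (if p then a else a - n) else 0.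
Proof.
case: u => [[[q y] [q2 y2]] [q3 y3]] /=; rewrite subr_eq => y_ne.
rewrite /act_coef /mass /act_term !hvbr_L /= !big_cons big_nil /= !addr0.
have no_other_slot (s s' : hvix F) (c : F) :
  (if ((q, y), s, s') == ((p, n + a), b2, b3) then c else 0) = 0.
  by case: eqP => // -[_ E _ _]; rewrite E eqxx in y_ne.
rewrite !no_other_slot !addr0 !mul1r.
case: eqP => [[-> /addrI -> -> ->]|NE]; first by rewrite eqxx.
by case: eqP => // -[Eq Ey E2 E3]; case: NE; rewrite Eq Ey E2 E3.
Qed.

Lemma act3_vanishing (w : hv3 F) (x : hv1 F) :
  (forall b, coef3 w b = 0) -> forall b, coef3 (act3 x w) b = 0.
Proof.
move=> w0 b; rewrite coef3E; case: ifP => // nondeg_b.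
rewrite mass_act3 big1 // => tx _.
rewrite (sum_by_mass w (fun u => act_coef tx u b)) big1 // => u _.
have [deg_u | nondeg_u] := boolP (degenerate3 u).
  by rewrite act_coef_degenerate ?nondeg_b ?mulr0.
by have := w0 u; rewrite coef3E (negbTE nondeg_u) => ->; rewrite mul0r.
Qed.

Lemma L_annihilated_vanishing (hchar : [pchar F] =i pred0) (w : hv3 F) :
  (forall (n : nat) t, coef3 (act3 [:: (1, (false, n%:R))] w) t = 0) ->
  forall b, coef3 w b = 0.
Proof.
move=> annihilated b; rewrite coef3E; case: ifP => // nondeg_b.
case: b nondeg_b => [[[p a] b2] b3] nondeg_b.
(* n avoids a (so a - n != 0), -a (so the target has no I_0 in slot 1), and
   every u.1.1.2 - a for u in w (so only b reaches the target). *)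
have [m] := nat_avoiding hchar (a :: - a :: [seq tw.2.1.1.2 - a | tw <- w]).
set n : F := m%:R; rewrite !in_cons !negb_or => /and3P [n_ne_a n_ne_Na n_fresh].
have nondeg_t : degenerate3 ((p, n + a), b2, b3) = false.
  rewrite /degenerate3 /= {1}/is_zero_ix /= addr_eq0 (negbTE n_ne_Na) andbF /=.
  move: nondeg_b; rewrite /degenerate3 /=.
  by move=> /negbT/norP [_ /norP [/negbTE -> /negbTE ->]].
have := annihilated m ((p, n + a), b2, b3).
rewrite coef3E nondeg_t mass_act3 big_cons big_nil addr0 big_seq.
rewrite (eq_bigr (fun tw => (if tw.2 == ((p, a), b2, b3) then tw.1 else 0)
    * (if p then a else a - n))); last first.
  move=> tw tw_in; rewrite act_coef_L; last first.
    by apply: contra n_fresh => /eqP E; apply/mapP; exists tw => //; rewrite E.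
  by case: ifP; rewrite ?mulr0 ?mul0r.
rewrite -big_seq -mulr_suml => /eqP; rewrite mulf_eq0 => /orP [/eqP //|].
case: p nondeg_b {nondeg_t} => /=.
  by rewrite /degenerate3 /is_zero_ix /= => /norP [/negbTE ->].
by rewrite subr_eq0 eq_sym (negbTE n_ne_a).
Qed.

End Action.

Theorem theorem3p1 (F : fieldType) (hchar : [pchar F] =i pred0)
  (Gamma : {pred F})
  (hsub : forall x y, x \in Gamma -> y \in Gamma -> x - y \in Gamma)
  (hZ : forall n : int, n%:~R \in Gamma)
  (r : hv2 F) (hr : valid2 Gamma r)
  (hIm : exists s : hv2 F, valid2 Gamma s /\ coef2 r =1 coef2 (one_minus_tau s)) :
  (forall b, coef3 (cyb r) b = 0) <->
  (forall x : hv1 F, valid1 Gamma x -> forall b, coef3 (act3 x (cyb r)) b = 0).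
Proof.
split=> [vanish x _ | modified].
  exact: act3_vanishing.
apply: (L_annihilated_vanishing hchar) => n; apply: modified.
(* L_n is a valid element since n lies in Z, which is contained in Gamma. *)
by rewrite /valid1 /= /valid_ix /= andbT; have := hZ n%:Z.
Qed.
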